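(* Let $(G,\phi,(g_1,\dots,g_n))$ be an $n$-expansion group. Then $\#G = \#L_\bullet(G) \leq 2^{n2^{n-1}-2^n+n+1}$. In particular, $\{g_1,\dots,g_n\}$ is a generating set for $G$.
   Context: $V_{[n]}=\mathbb{F}_2^n$ with basis $e_1,\dots,e_n$. An $n$-expansion group is a triple $(G,\phi,(g_1,\dots,g_n))$: $G$ a group, $\phi:G\to V_{[n]}$ a homomorphism with $\phi(g_i)=e_i$, $g_i^2=1$ for all $i$, $\ker\phi$ an elementary abelian $2$-group, and $[G,G]=\ker\phi$. With $G^{(1)}=G$, $G^{(i+1)}=[G,G^{(i)}]$, set $L_\bullet(G)=\bigoplus_{m\geq1}G^{(m)}/G^{(m+1)}$ (a set whose cardinality is $\#L_\bullet(G)$). *)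

(* abstract, possibly infinite groups are given
   explicitly by a record of operations and axioms. *)
From mathcomp Require Import all_boot all_algebra.
Set Implicit Arguments. Unset Strict Implicit. Unset Printing Implicit Defensive.
Import GRing.Theory.
From Stdlib Require List.

Record group_law (T : Type) := GroupLaw {
  gmul : T -> T -> T;
  ginv : T -> T;
  gone : T;
  gmulA : forall x y z, gmul x (gmul y z) = gmul (gmul x y) z;
  gmul1 : forall x, gmul gone x = x;
  gmulV : forall x, gmul (ginv x) x = gone
}.

Section GroupDefs.
Variables (T : Type) (L : group_law T).
Local Notation "x * y" := (gmul L x y).
Local Notation "x ^-1" := (ginv L x).
Local Notation "1" := (gone L).

Inductive generated (S : T -> Prop) : T -> Prop :=
| gen_in x : S x -> generated S x
| gen_one : generated S 1
| gen_mul x y : generated S x -> generated S y -> generated S (x * y)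
| gen_inv x : generated S x -> generated S (x^-1).

Definition gcomm (x y : T) : T := x^-1 * (y^-1 * (x * y)).

Definition comm_subgroup (A B : T -> Prop) : T -> Prop :=
  generated (fun z => exists x y, A x /\ B y /\ z = gcomm x y).

Fixpoint lcs (m : nat) : T -> Prop :=
  match m with
  | 0 => fun _ => True
  | 1 => fun _ => True
  | m'.+1 => comm_subgroup (fun _ => True) (lcs m')
  end.

Definition card_mod (X : Type) (A : X -> Prop) (R : X -> X -> Prop) (N : nat) :=
  exists s : seq X,
    size s = N /\ (forall x, List.In x s -> A x) /\
    (forall x, A x -> exists2 y, List.In y s & R x y) /\
    List.ForallOrdPairs (fun a b => ~ R a b) s.

(* Elements of L_bullet(G) = (+)_{m>=1} G^(m)/G^(m+1): finitely supported
   families f with f m in G^(m+1) representing a class of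
   G^(m+1)/G^(m+2) (shifted index m |-> m+1). *)
Definition Lbullet_elem (f : nat -> T) : Prop :=
  (forall m, lcs m.+1 (f m)) /\ exists M, forall m, M <= m -> lcs m.+2 (f m).

Definition Lbullet_eq (f f' : nat -> T) : Prop :=
  forall m, lcs m.+2 ((f m)^-1 * f' m).

Definition card_Lbullet (N : nat) := card_mod Lbullet_elem Lbullet_eq N.

Definition card_group (N : nat) := card_mod (fun _ : T => True) (@eq T) N.

End GroupDefs.

Definition Vn (n : nat) := 'rV['F_2]_n.
Definition basis_e (n : nat) (i : 'I_n) : Vn n := delta_mx ord0 i.

Definition expansion_group (n : nat) (T : Type) (L : group_law T)
    (phi : T -> Vn n) (g : 'I_n -> T) : Prop :=
  [/\ (forall x y, phi (gmul L x y) = (phi x + phi y)%R),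
      (forall i, phi (g i) = basis_e i),
      (forall i, gmul L (g i) (g i) = gone L),
      (forall x y, phi x = 0%R -> phi y = 0%R ->
         gmul L x x = gone L /\ gmul L x y = gmul L y x) &
      (forall x, comm_subgroup L (fun _ => True) (fun _ => True) x <-> phi x = 0%R)].

From mathcomp Require Import all_boot all_algebra.
From mathcomp Require Import boolp.
(* Let M = ker phi: an elementary abelian 2-group containing every commutator.
   Each element of G is a word in the g_i times an element of M, and M is
   spanned by the commutators [g_a, g_j, g_k (k in S)] with a < j, a < S and
   j not in S.  The Hall-Witt identity for involutions shows that this family
   is stable under commutation with each g_i, and filtering M by the number of
   distinct generators involved (nothing survives beyond n of them) shows that
   it spans M.  The family is indexed by the pairs (A, j) with j in A not the
   least element of A, so it has n 2^(n-1) - 2^n + 1 members, which bounds #G.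
   The same filtration makes the lower central series reach 1 at step n + 3,
   and choosing transversals along it matches the elements of G with those of
   L(G). *)

Set Implicit Arguments. Unset Strict Implicit. Unset Printing Implicit Defensive.
Import GRing.Theory.

Lemma card_subsets_ord n : #|{set 'I_n}| = 2 ^ n.
Proof. by rewrite -cardsT -powersetT card_powerset cardsT card_ord. Qed.

Lemma sum_card_subsets_ord n : \sum_(A : {set 'I_n}) #|A| = n * 2 ^ n.-1.
Proof.
have sum2 : (\sum_(A : {set 'I_n}) #|A|) * 2 = n * 2 ^ n.
  rewrite muln2 -addnn {2}(reindex_inj (@setC_inj _)) -big_split /=.
  rewrite (eq_bigr (fun _ => n)) => [|A _]; last by rewrite cardsC card_ord.
  by rewrite sum_nat_const card_subsets_ord mulnC.
case: n sum2 => [|n]; first by move/eqP; rewrite muln_eq0 => /orP[/eqP|].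
by rewrite expnS (mulnC 2) mulnA => /eqP; rewrite eqn_pmul2r // => /eqP.
Qed.

Lemma sum_card_subsets_ord_pred n :
  \sum_(A : {set 'I_n}) (#|A|).-1 + 2 ^ n = n * 2 ^ n.-1 + 1.
Proof.
rewrite -card_subsets_ord -sum1_card -big_split /= -sum_card_subsets_ord.
rewrite (bigD1 set0) // [in RHS](bigD1 set0) //= cards0 addnC.
congr (_ + _); apply: eq_bigr => A A0.
by rewrite addn1 prednK // card_gt0.
Qed.

Lemma InP (X : eqType) (x : X) (s : seq X) : reflect (List.In x s) (x \in s).
Proof.
elim: s => [|y s IH] /=; first by constructor.
rewrite in_cons; apply: (iffP orP) => [[/eqP->|/IH]|[->|/IH]]; by auto.
Qed.

Lemma card_mod_map (X : eqType) (Y : Type) (A : Y -> Prop) (R : Y -> Y -> Prop)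
    (f : X -> Y) (U : seq X) :
  uniq U -> (forall u, u \in U -> A (f u)) ->
  (forall y, A y -> exists2 u, u \in U & R y (f u)) ->
  {in U &, forall u v, R (f u) (f v) -> u = v} ->
  card_mod A R (size U).
Proof.
move=> Uuniq UA Ucover Uinj; exists (map f U); rewrite size_map.
split=> //; split; first by move=> _ /List.in_map_iff [u [<- /InP /UA]].
split=> [y /Ucover [u uU Ryu]|].
  by exists (f u) => //; apply/List.in_map_iff; exists u; split => //; apply/InP.
elim: U Uuniq Uinj {UA Ucover} => [|u U IH] /=; first by constructor.
case/andP=> uU Uuniq Uinj; constructor.
  apply/List.Forall_forall => _ /List.in_map_iff [v [<- /InP vU]] Ruv.
  by move: uU; rewrite (Uinj u v) ?mem_head ?inE ?vU ?orbT.
by apply: IH => // v w vU wU; apply: Uinj; rewrite inE ?vU ?wU orbT.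
Qed.

Declare Scope group_law_scope.

Section GroupLaw.
Variables (T : Type) (L : group_law T).
Local Notation "x * y" := (gmul L x y) : group_law_scope.
Local Notation "x ^-1" := (ginv L x) : group_law_scope.
Local Notation "1" := (gone L) : group_law_scope.
Local Notation "[~ x , y ]" := (gcomm L x y) : group_law_scope.
Local Open Scope group_law_scope.

Lemma mul1g x : 1 * x = x. Proof. exact: gmul1. Qed.
Lemma mulVg x : x^-1 * x = 1. Proof. exact: gmulV. Qed.
Lemma mulgA x y z : x * (y * z) = x * y * z. Proof. exact: gmulA. Qed.
Lemma mulKg x y : x^-1 * (x * y) = y. Proof. by rewrite mulgA mulVg mul1g. Qed.
Lemma mulgV x : x * x^-1 = 1.
Proof. by rewrite -{1}(mulKg x^-1 x) mulVg -mulgA mul1g mulVg. Qed.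
Lemma mulg1 x : x * 1 = x. Proof. by rewrite -(mulVg x) mulgA mulgV mul1g. Qed.
Lemma mulKVg x y : x * (x^-1 * y) = y. Proof. by rewrite mulgA mulgV mul1g. Qed.
Lemma mulgK x y : x * y * y^-1 = x. Proof. by rewrite -mulgA mulgV mulg1. Qed.
Lemma mulgI x y z : x * y = x * z -> y = z.
Proof. by move=> e; rewrite -(mulKg x y) e mulKg. Qed.
Lemma mulg_eq1_inv x y : x * y = 1 -> x^-1 = y.
Proof. by move=> e; rewrite -(mulKg x y) e mulg1. Qed.
Lemma invgK x : x^-1^-1 = x.
Proof. by apply: mulg_eq1_inv; rewrite mulVg. Qed.
Lemma invMg x y : (x * y)^-1 = y^-1 * x^-1.
Proof. by apply: mulg_eq1_inv; rewrite -mulgA mulKVg mulgV. Qed.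
Lemma invg1 : 1^-1 = 1. Proof. by apply: mulg_eq1_inv; rewrite mul1g. Qed.

Definition subgroup (P : T -> Prop) :=
  [/\ P 1, forall x y, P x -> P y -> P (x * y) & forall x, P x -> P x^-1].

Lemma generated_min (S P : T -> Prop) x : subgroup P -> (forall y, S y -> P y) ->
  generated L S x -> P x.
Proof. by case=> P1 PM PV SP; elim=> //; auto. Qed.

Lemma generated_subgroup S : subgroup (generated L S).
Proof. by split; [exact: gen_one | exact: gen_mul | exact: gen_inv]. Qed.

Lemma generated_mono (S S' : T -> Prop) : (forall x, S x -> S' x) ->
  forall x, generated L S x -> generated L S' x.
Proof.
move=> SS' x; apply: generated_min (generated_subgroup S') _ => y /SS'.
exact: gen_in.
Qed.

Definition conjg (z h : T) := h^-1 * (z * h).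
Local Notation "x ^ y" := (conjg x y) : group_law_scope.

Lemma commgEl x y : [~ x, y] = x^-1 * x ^ y. Proof. by []. Qed.
Lemma conjgM z h k : z ^ (h * k) = (z ^ h) ^ k.
Proof. by rewrite /conjg invMg !mulgA. Qed.
Lemma conjg1 z : z ^ 1 = z. Proof. by rewrite /conjg invg1 mulg1 mul1g. Qed.
Lemma invg_comm x y : [~ x, y]^-1 = [~ y, x].
Proof. by rewrite /gcomm !invMg !invgK !mulgA. Qed.
Lemma commMgJ x y z : [~ x * y, z] = [~ x, z] ^ y * [~ y, z].
Proof. by rewrite /gcomm /conjg !invMg ?invgK !mulgA !mulgK. Qed.
Lemma commgMJ x y z : [~ x, y * z] = [~ x, z] * [~ x, y] ^ z.
Proof. by rewrite /gcomm /conjg !invMg ?invgK !mulgA !mulgK. Qed.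
Lemma comm1g y : [~ 1, y] = 1. Proof. by rewrite /gcomm invg1 !mul1g mulVg. Qed.
Lemma commg1 y : [~ y, 1] = 1. Proof. by rewrite /gcomm invg1 mul1g mulg1 mulVg. Qed.

Lemma lcs_subgroup m : subgroup (lcs L m).
Proof. by case: m => [|[|m]]; [split | split | exact: generated_subgroup]. Qed.

Lemma lcs_decr m x : lcs L m.+1 x -> lcs L m x.
Proof.
elim: m x => [|[|m] IH] x //=; apply: generated_mono => _ [y [z [_ [Hz ->]]]].
by exists y, z; split=> //; split=> //; apply: IH.
Qed.

Lemma exists_transversal (s : seq {classic T}) (B C : T -> Prop) : subgroup C ->
  exists R : seq {classic T}, [/\ uniq R, forall r, r \in R -> B r,
    forall x, x \in s -> B x -> exists2 r, r \in R & C (x^-1 * r) &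
    forall r r', r \in R -> r' \in R -> C (r^-1 * r') -> r = r'].
Proof.
case=> C1 CM CV; elim: s => [|x s [R [Runiq RB Rcover Rinj]]].
  by exists [::]; split.
have [[Bx xnew]|xold] :=
  pselect (B x /\ ~ exists2 r, r \in R & C (x^-1 * r)); last first.
  exists R; split=> // y; rewrite inE => /orP[/eqP-> Bx|]; last exact: Rcover.
  by apply: contra_notP xold => ?; split.
exists (x :: R); split.
- by rewrite /= Runiq andbT; apply/negP => xR; apply: xnew; exists x; rewrite ?mulVg.
- by move=> r; rewrite inE => /orP[/eqP->|/RB].
- move=> y; rewrite inE => /orP[/eqP-> _|ys /(Rcover _ ys) [r rR Cr]].
    by exists x; rewrite ?mem_head ?mulVg.
  by exists r; rewrite // inE rR orbT.
- move=> r r'; rewrite !inE => /orP[/eqP->|rR] /orP[/eqP->|r'R] // Crr'.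
  + by case: xnew; exists r'.
  + by case: xnew; exists r => //; move: (CV _ Crr'); rewrite invMg invgK.
  + exact: Rinj.
Qed.

Definition gprod (t : seq T) : T := foldr (gmul L) 1 t.

Section SubgroupChain.
Variable A : nat -> T -> Prop.
Hypothesis A_subgroup : forall m, subgroup (A m).
Hypothesis A_decr : forall m x, A m.+1 x -> A m x.
Variable s : seq {classic T}.
Hypothesis s_cover : forall x, x \in s.

Lemma A_decr_add m k x : A (m + k) x -> A m x.
Proof. by elim: k => [|k IH]; rewrite ?addn0 // addnS => /A_decr/IH. Qed.

Definition transversal m : seq {classic T} :=
  sval (cid (exists_transversal s (A m) (A_subgroup m.+1))).

Lemma transversalP m : [/\ uniq (transversal m),
  forall r, r \in transversal m -> A m r,
  forall x, A m x -> exists2 r, r \in transversal m & A m.+1 (x^-1 * r) &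
  forall r r', r \in transversal m -> r' \in transversal m ->
    A m.+1 (r^-1 * r') -> r = r'].
Proof.
rewrite /transversal; case: cid => R /= [Runiq RA Rcover Rinj].
by split=> // x; apply: Rcover.
Qed.

Fixpoint tuples (j m : nat) : seq (seq {classic T}) :=
  if j is j'.+1 then [seq r :: t | r <- transversal m, t <- tuples j' m.+1]
  else [:: [::]].

Lemma tuples_uniq j m : uniq (tuples j m).
Proof.
elim: j m => [|j IH] m //=; have [Runiq _ _ _] := transversalP m.
by apply: allpairs_uniq => // [[r t] [r' t']] _ _ [-> ->].
Qed.

Lemma tuples_cons j m r t :
  r \in transversal m -> t \in tuples j m.+1 -> r :: t \in tuples j.+1 m.
Proof. exact: (allpairs_f (fun r t => r :: t)). Qed.

Lemma tuplesS j m t : t \in tuples j.+1 m ->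
  exists r t', [/\ t = r :: t', r \in transversal m & t' \in tuples j m.+1].
Proof. by case/allpairsP=> [[r t'] [/= rR t'T ->]]; exists r, t'. Qed.

Lemma size_tuples j m t : t \in tuples j m -> size t = j.
Proof.
elim: j m t => [|j IH] m t; first by rewrite mem_seq1 => /eqP->.
by case/tuplesS=> r [t' [-> _ /IH /= ->]].
Qed.

Lemma tuples_nth j m t p :
  t \in tuples j m -> p < j -> nth 1 t p \in transversal (m + p).
Proof.
elim: j m t p => [|j IH] m t p // /tuplesS [r [t' [-> rR t'T]]].
by case: p => [|p] /=; rewrite ?addn0 // ltnS addnS -addSn; apply: IH.
Qed.

Lemma gprod_tuples j m t : t \in tuples j m -> A m (gprod t).
Proof.
elim: j m t => [|j IH] m t; first by rewrite mem_seq1 => /eqP->; case: (A_subgroup m).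
case/tuplesS=> r [t' [-> rR /IH /A_decr At']].
have [_ AM _] := A_subgroup m; have [_ RA _ _] := transversalP m.
exact: AM (RA _ rR) At'.
Qed.

Lemma tuples_cover j m x : A m x ->
  exists2 t, t \in tuples j m & exists2 w, A (m + j) w & x = gprod t * w.
Proof.
elim: j m x => [|j IH] m x Ax.
  by exists [::]; rewrite ?mem_seq1 //; exists x; rewrite ?addn0 ?mul1g.
have [_ _ Rcover _] := transversalP m; have [r rR Ar] := Rcover x Ax.
have [_ _ AV] := A_subgroup m.+1.
have /IH [t tT [w Aw ew]] : A m.+1 (r^-1 * x) by move: (AV _ Ar); rewrite invMg invgK.
exists (r :: t); first exact: tuples_cons.
by exists w; rewrite ?addnS -?addSn //= -mulgA -ew mulKVg.
Qed.

Lemma tuples_gprod_inj j m t t' w w' : t \in tuples j m -> t' \in tuples j m ->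
  A (m + j) w -> A (m + j) w' -> gprod t * w = gprod t' * w' -> t = t'.
Proof.
elim: j m t t' w w' => [|j IH] m t t' w w'.
  by rewrite !mem_seq1 => /eqP-> /eqP->.
case/tuplesS=> r [u [-> rR uT]] /tuplesS [r' [u' [-> r'R u'T]]].
rewrite addnS -addSn => Aw Aw'; rewrite /= -!mulgA => e.
have [_ _ _ Rinj] := transversalP m; have [_ AM AV] := A_subgroup m.+1.
have er : r = r'.
  apply: Rinj => //; have -> : r^-1 * r' = (gprod u * w) * (gprod u' * w')^-1.
    by apply: (@mulgI r); rewrite mulKVg mulgA e mulgK.
  have Au := gprod_tuples uT; have Au' := gprod_tuples u'T.
  exact: AM (AM _ _ Au (A_decr_add Aw)) (AV _ (AM _ _ Au' (A_decr_add Aw'))).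
by move: e; rewrite er => /mulgI /(IH _ _ _ _ _ uT u'T Aw Aw') ->.
Qed.

Lemma tuples_cover_family j m (f : nat -> T) : (forall p, A p (f p)) ->
  exists2 t, t \in tuples j m &
    forall p, p < j -> A (m + p).+1 ((f (m + p))^-1 * nth 1 t p).
Proof.
elim: j m => [|j IH] m Af; first by exists [::]; rewrite ?mem_seq1.
have [_ _ Rcover _] := transversalP m; have [r rR Ar] := Rcover _ (Af m).
have [t tT At] := IH m.+1 Af.
exists (r :: t); first exact: tuples_cons.
by case=> [|p] /=; rewrite ?addn0 // ltnS addnS -addSn => /At.
Qed.

Lemma tuples_family_inj j m t t' : t \in tuples j m -> t' \in tuples j m ->
  (forall p, p < j -> A (m + p).+1 ((nth 1 t p)^-1 * nth 1 t' p)) -> t = t'.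
Proof.
move=> tT t'T Att'; apply: (eq_from_nth (x0 := 1)) => [|p].
  by rewrite (size_tuples tT) (size_tuples t'T).
rewrite (size_tuples tT) => pj; have [_ _ _ Rinj] := transversalP (m + p).
by apply: Rinj; [exact: tuples_nth tT pj | exact: tuples_nth t'T pj | exact: Att'].
Qed.

Lemma subgroup_chain_card K : (forall x, A 0 x) -> (forall x, A K x -> x = 1) ->
  exists N, [/\ card_mod (fun _ : T => True) (@eq T) N,
    card_mod (fun f : nat -> T =>
        (forall m, A m (f m)) /\ exists M, forall m, M <= m -> A m.+1 (f m))
      (fun f f' => forall m, A m.+1 ((f m)^-1 * f' m)) N
    & N <= size s].
Proof.
move=> A0 AK; set U := tuples K 0.
have A1 m : A m 1 by case: (A_subgroup m).
have gprod_inj : {in U &, injective (gprod : _ -> {classic T})}.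
  move=> t t' tU t'U e.
  by apply: (tuples_gprod_inj tU t'U (A1 _) (A1 _)); rewrite !mulg1.
exists (size U); split.
- apply: (card_mod_map (f := gprod : seq {classic T} -> T) (tuples_uniq K 0)) => // x _.
  have [t tU [w /AK -> ->]] := tuples_cover K (A0 x).
  by exists t; rewrite ?mulg1.
- apply: (card_mod_map (tuples_uniq K 0)
    (f := (fun t m => nth 1 t m) : seq {classic T} -> nat -> T)).
  + move=> t tU; have szt := size_tuples tU; split.
      move=> m; case: (ltnP m K) => [mK|Km]; last by rewrite nth_default ?szt.
      have [_ RA _ _] := transversalP m.
      by apply: RA; rewrite -[m]add0n (tuples_nth tU).
    by exists K => m Km; rewrite nth_default ?szt.
  + move=> f [Af _]; have [t tU At] := tuples_cover_family K 0 Af.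
    exists t => // m; case: (ltnP m K) => [/At //|Km].
    have -> : f m = 1 by apply/AK/(@A_decr_add K (m - K)); rewrite subnKC.
    by rewrite nth_default ?(size_tuples tU) // invg1 mul1g.
  + by move=> t t' tU t'U Att'; apply: (tuples_family_inj tU t'U) => p _; exact: Att'.
- rewrite -(size_map (gprod : _ -> {classic T}) U).
  by apply: uniq_leq_size => [|x _ //]; rewrite (map_inj_in_uniq gprod_inj) tuples_uniq.
Qed.

End SubgroupChain.

Section CommutatorCalculus.
Variable M : T -> Prop.
Hypothesis M_subgroup : subgroup M.
Hypothesis M_abelian : forall x y, M x -> M y -> x * y = y * x.
Hypothesis M_exponent2 : forall x, M x -> x * x = 1.
Hypothesis M_commg : forall x y, M [~ x, y].

Lemma M1 : M 1. Proof. by case: M_subgroup. Qed.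
Lemma M_mul x y : M x -> M y -> M (x * y).
Proof. by case: M_subgroup => _ MM _; apply: MM. Qed.

Lemma M_invE z : M z -> z^-1 = z.
Proof. by move=> Mz; apply: mulg_eq1_inv; apply: M_exponent2. Qed.

Lemma M_preimage_subgroup (P : T -> Prop) (f : T -> T) : subgroup P -> f 1 = 1 ->
  (forall x y, M x -> M y -> f (x * y) = f x * f y) ->
  subgroup (fun x => M x /\ P (f x)).
Proof.
case=> P1 PM _ f1 fM; split=> [|x y [Mx Px] [My Py]|x [Mx Px]].
- by rewrite f1; split; [exact: M1 | exact: P1].
- by rewrite fM //; split; [exact: M_mul | exact: PM].
- by rewrite M_invE.
Qed.

Lemma conjg_ME z h : M z -> z ^ h = z * [~ z, h].
Proof. by move=> Mz; rewrite commgEl M_invE // mulgA M_exponent2 // mul1g. Qed.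

Lemma M_conjg z h : M z -> M (z ^ h).
Proof. by move=> Mz; rewrite conjg_ME //; apply: M_mul. Qed.

Lemma commg_ME z h : M z -> [~ z, h] = z * z ^ h.
Proof. by move=> Mz; rewrite commgEl M_invE. Qed.

Lemma conjg_M z c : M z -> M c -> z ^ c = z.
Proof. by move=> Mz Mc; rewrite /conjg (M_abelian Mz Mc) mulKg. Qed.

Lemma commg_M z w : M z -> M w -> [~ z, w] = 1.
Proof. by move=> Mz Mw; rewrite commgEl conjg_M // mulVg. Qed.

Lemma commgC x y : [~ x, y] = [~ y, x].
Proof. by rewrite -invg_comm M_invE. Qed.

Lemma commMg_M z w h : M z -> M w -> [~ z * w, h] = [~ z, h] * [~ w, h].
Proof. by move=> Mz Mw; rewrite commMgJ conjg_M. Qed.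

(* Conjugation by [b * a] and by [a * b] differ by conjugation by [[~ b, a]],
   which acts trivially on the abelian group M. *)
Lemma comm_commgC z a b : M z -> [~ [~ z, a], b] = [~ [~ z, b], a].
Proof.
move=> Mz; have Mza := M_conjg a Mz; have Mzb := M_conjg b Mz.
rewrite (commg_ME a Mz) (commg_ME b Mz) (commMg_M _ Mz Mza) (commMg_M _ Mz Mzb).
rewrite (commg_ME a Mz) (commg_ME b Mz) (commg_ME b Mza) (commg_ME a Mzb) -!conjgM.
have -> : b * a = a * b * [~ b, a] by rewrite /gcomm !mulgA mulgK mulgV mul1g.
rewrite (conjgM _ (a * b)) (conjg_M (M_conjg _ Mz) (M_commg b a)).
move: Mza Mzb; set za := z ^ a; set zb := z ^ b => Mza Mzb.
by clearbody za zb; rewrite !mulgA -(mulgA z zb za) (M_abelian Mzb Mza) !mulgA.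
Qed.

Lemma comm_comm_invol z a : M z -> a * a = 1 -> [~ [~ z, a], a] = 1.
Proof.
move=> Mz aa; have Mza := M_conjg a Mz.
rewrite (commg_ME a Mz) (commMg_M _ Mz Mza) (commg_ME a Mz) (commg_ME a Mza).
rewrite -conjgM aa conjg1.
by rewrite mulgA -(mulgA z) M_exponent2 // mulg1 M_exponent2.
Qed.

Section Involutions.
Variables x y z : T.
Hypotheses (xx : x * x = 1) (yy : y * y = 1) (zz : z * z = 1).

Let invx : x^-1 = x. Proof. exact: mulg_eq1_inv. Qed.
Let invy : y^-1 = y. Proof. exact: mulg_eq1_inv. Qed.
Let invz : z^-1 = z. Proof. exact: mulg_eq1_inv. Qed.
Let xxK w : w * x * x = w. Proof. by rewrite -mulgA xx mulg1. Qed.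
Let yyK w : w * y * y = w. Proof. by rewrite -mulgA yy mulg1. Qed.
Let zzK w : w * z * z = w. Proof. by rewrite -mulgA zz mulg1. Qed.

Lemma comm_comm_l : [~ [~ x, y], x] = 1.
Proof.
rewrite commg_ME ?M_commg //.
have -> : [~ x, y] ^ x = [~ x, y]^-1.
  by rewrite /conjg /gcomm !invMg !(invx, invy) !mulgA xx mul1g.
by rewrite mulgV.
Qed.

Lemma comm_comm_r : [~ [~ x, y], y] = 1.
Proof.
rewrite commg_ME ?M_commg //.
have -> : [~ x, y] ^ y = [~ x, y]^-1.
  by rewrite /conjg /gcomm !invMg !(invx, invy) !mulgA yyK.
by rewrite mulgV.
Qed.

Lemma hall_witt_invol :
  [~ [~ x, y], z] = [~ [~ y, z], x] * [~ [~ z, x], y].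
Proof.
have swap w a b : M a -> M b -> w * a * b = w * b * a.
  by move=> Ma Mb; rewrite -!mulgA (M_abelian Ma Mb).
have reorder u1 u2 u3 v1 v2 v3 : M u1 -> M u2 -> M u3 -> M v1 -> M v2 -> M v3 ->
    u1 * v1 * (u2 * v2 * (u3 * v3)) = u1^-1 * v2 * u3^-1 * v1 * u2^-1 * v3.
  move=> Mu1 Mu2 Mu3 Mv1 Mv2 Mv3; rewrite !M_invE // !mulgA.
  by rewrite (swap _ u2) // (swap _ v1) // (swap _ u2 u3) // (swap _ v1 u3).
suff : [~ [~ x, y], z] * ([~ [~ y, z], x] * [~ [~ z, x], y]) = 1.
  by move/mulg_eq1_inv; rewrite M_invE // M_commg.
have Mxy := M_commg x y; have Myz := M_commg y z; have Mzx := M_commg z x.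
have Mxyz := M_conjg z Mxy; have Myzx := M_conjg x Myz.
have Mzxy := M_conjg y Mzx.
rewrite (commg_ME z Mxy) (commg_ME x Myz) (commg_ME y Mzx) reorder //.
rewrite /conjg /gcomm !invMg !(invx, invy, invz) !mulgA.
by rewrite !(xxK, yyK, zzK) yy.
Qed.

End Involutions.

Variables (n : nat) (g : 'I_n -> T).
Hypothesis g_invol : forall i, g i * g i = 1.

Definition hword (l : seq 'I_n) : T := foldr (fun i w => g i * w) 1 l.

Definition lcomm (l : seq 'I_n) (z : T) : T := foldr (fun i w => [~ w, g i]) z l.

Lemma M_lcomm l z : M z -> M (lcomm l z).
Proof. by case: l => //= i l _; apply: M_commg. Qed.

Lemma lcomm1 l : lcomm l 1 = 1.
Proof. by elim: l => //= i l ->; rewrite comm1g. Qed.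

Lemma lcommM l z w : M z -> M w -> lcomm l (z * w) = lcomm l z * lcomm l w.
Proof. by move=> Mz Mw; elim: l => //= i l ->; rewrite commMg_M //; apply: M_lcomm. Qed.

Lemma lcomm_commg l i z : M z -> lcomm l [~ z, g i] = [~ lcomm l z, g i].
Proof. by move=> Mz; elim: l => //= j l ->; rewrite comm_commgC //; apply: M_lcomm. Qed.

Lemma lcomm_rem l i z : M z -> i \in l -> lcomm l z = [~ lcomm (rem i l) z, g i].
Proof.
move=> Mz; elim: l => //= j l IH; rewrite inE; case: eqVneq => [-> _ //|_ /= il].
by rewrite IH // comm_commgC //; apply: M_lcomm.
Qed.

Lemma lcomm_perm l l' z : M z -> perm_eq l l' -> lcomm l z = lcomm l' z.
Proof.
move=> Mz; elim: l l' => [|i l IH] l' pl; first by case: l' pl => // j l' /perm_size.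
have il' : i \in l' by rewrite -(perm_mem pl) mem_head.
rewrite (lcomm_rem Mz il') /= (IH (rem i l')) //.
by rewrite -(perm_cons i) (perm_trans pl) ?perm_to_rem.
Qed.

Lemma lcomm_setU1 (S : {set 'I_n}) i z : M z -> i \notin S ->
  lcomm (enum (i |: S)) z = [~ lcomm (enum S) z, g i].
Proof.
move=> Mz iS; rewrite (@lcomm_perm _ (i :: enum S)) //.
apply: uniq_perm; rewrite /= ?enum_uniq ?mem_enum ?iS // => k.
by rewrite mem_enum in_setU1 in_cons mem_enum.
Qed.

Lemma lcomm_commg_mem l i z : M z -> i \in l -> [~ lcomm l z, g i] = 1.
Proof.
by move=> Mz il; rewrite (lcomm_rem Mz il) comm_comm_invol //; apply: M_lcomm.
Qed.

Definition basis_comm (a j : 'I_n) (S : {set 'I_n}) : T := lcomm (enum S) [~ g a, g j].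

Definition basis_index (a j : 'I_n) (S : {set 'I_n}) :=
  [/\ a < j, {in S, forall k : 'I_n, a < k} & j \notin S].

Definition basis_elt x := exists a j S, basis_index a j S /\ x = basis_comm a j S.

Definition span := generated L basis_elt.

Lemma span1 : span 1. Proof. exact: gen_one. Qed.
Lemma span_mul x y : span x -> span y -> span (x * y). Proof. exact: gen_mul. Qed.

Lemma span_M x : span x -> M x.
Proof.
apply: generated_min M_subgroup _ => _ [a [j [S [_ ->]]]].
exact/M_lcomm/M_commg.
Qed.

Lemma basis_span a j S : basis_index a j S -> span (basis_comm a j S).
Proof. by move=> abS; apply: gen_in; exists a, j, S. Qed.

(* Either [g i] already occurs in the commutator (which is then killed), or
   it extends it to a longer basis commutator, or [i < a] and the Hall-Witt
   identity splits the result into two basis commutators with least index i. *)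
Lemma span_commg_basis a j S i : basis_index a j S -> span [~ basis_comm a j S, g i].
Proof.
case=> aj aS jS; rewrite /basis_comm; have Mc := M_commg (g a) (g j).
have aS' : a \notin S by apply/negP => /aS; rewrite ltnn.
have [iS|iS] := boolP (i \in S).
  by rewrite lcomm_commg_mem ?mem_enum //; apply: span1.
have [->|ia] := eqVneq i a.
  by rewrite -lcomm_commg // comm_comm_l // lcomm1; apply: span1.
have [->|ij] := eqVneq i j.
  by rewrite -lcomm_commg // comm_comm_r // lcomm1; apply: span1.
have [ai|ia'] := ltnP a i.
  rewrite -lcomm_setU1 //; apply: basis_span; split=> // [k|].
    by rewrite in_setU1 => /orP[/eqP->|/aS].
  by rewrite in_setU1 negb_or eq_sym ij.
have {ia'} i_lt_a : i < a by rewrite ltn_neqAle ia ia'.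
have Mji := M_commg (g j) (g i); have Mia := M_commg (g i) (g a).
rewrite -lcomm_commg // hall_witt_invol // lcommM ?M_commg //.
rewrite (lcomm_commg _ a Mji) (lcomm_commg _ j Mia).
rewrite -(lcomm_setU1 Mji aS') -(lcomm_setU1 Mia jS) (commgC (g j)).
have aj' : a != j by apply: contraTneq aj => ->; rewrite ltnn.
apply: span_mul; apply: basis_span; split.
- exact: ltn_trans aj.
- by move=> k; rewrite in_setU1 => /orP[/eqP->//|/aS]; apply: ltn_trans.
- by rewrite in_setU1 negb_or eq_sym aj' jS.
- exact: i_lt_a.
- move=> k; rewrite in_setU1 => /orP[/eqP->|/aS]; last exact: ltn_trans.
  exact: ltn_trans aj.
- by rewrite in_setU1 negb_or aj' aS'.
Qed.

Lemma span_commg x i : span x -> span [~ x, g i].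
Proof.
move=> Sx; suff [] : M x /\ span [~ x, g i] by [].
have Psub := M_preimage_subgroup (f := fun x => [~ x, g i])
  (generated_subgroup basis_elt) (comm1g _) (fun x y => @commMg_M x y _).
apply: generated_min Psub _ Sx => _ [a [j [S [abS ->]]]].
by split; [apply/M_lcomm/M_commg | apply: span_commg_basis].
Qed.

Lemma span_commg_gen a b : span [~ g a, g b].
Proof.
wlog ab : a b / a <= b.
  by move=> IH; case: (leqP a b) => [/IH //|/ltnW/IH]; rewrite commgC.
case: (eqVneq a b) => [->|ne]; first by rewrite /gcomm mulKg mulVg; apply: span1.
have -> : [~ g a, g b] = basis_comm a b set0 by rewrite /basis_comm enum_set0.
by apply: basis_span; split=> [|k|]; rewrite ?inE // ltn_neqAle ne.
Qed.

Lemma span_conj_word x l : span x -> span (x ^ hword l).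
Proof.
elim: l x => [|i l IH] x Sx /=; first by rewrite conjg1.
rewrite conjgM; apply: IH; rewrite conjg_ME; last exact: span_M.
by apply: span_mul => //; apply: span_commg.
Qed.

Lemma span_comm_words l l' : span [~ hword l, hword l'].
Proof.
have span_gen_word i : span [~ g i, hword l'].
  elim: l' => [|j l' IH] /=; first by rewrite commg1; apply: span1.
  by rewrite commgMJ; apply: span_mul => //; apply/span_conj_word/span_commg_gen.
elim: l => [|i l IH] /=; first by rewrite comm1g; apply: span1.
by rewrite commMgJ; apply: span_mul => //; apply: span_conj_word.
Qed.

Lemma span_lcomm l x : span x -> span (lcomm l x).
Proof. by elim: l => //= i l IH Sx; apply/span_commg/IH. Qed.

Hypothesis words_cover : forall x, exists l, exists2 m, M m & x = hword l * m.
Hypothesis M_derived :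
  forall x, M x -> comm_subgroup L (fun _ => True) (fun _ => True) x.

Lemma commg_decomp x y : exists l l' a b, [/\ M a, M b &
  [~ x, y] = [~ b, hword l] * [~ hword l, hword l'] * [~ a, hword l']].
Proof.
have [l [a Ma ->]] := words_cover x; have [l' [b Mb ->]] := words_cover y.
exists l, l', a, b; split=> //.
rewrite commMgJ (conjg_M (M_commg _ _) Ma) (commgMJ (hword l)) (commgMJ a).
rewrite !(conjg_M (M_commg _ _) Mb) (commg_M Ma Mb) mul1g.
by rewrite (commgC (hword l) b).
Qed.

Definition filt_gen k y := exists (S : {set 'I_n}) z,
  [/\ M z, k <= #|S| & y = lcomm (enum S) z].

Definition filt k := generated L (filt_gen k).

Lemma filt_M k x : filt k x -> M x.
Proof. by apply: generated_min M_subgroup _ => _ [S [z [Mz _ ->]]]; apply: M_lcomm. Qed.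

Lemma filt0 z : M z -> filt 0 z.
Proof. by move=> Mz; apply: gen_in; exists set0, z; rewrite enum_set0. Qed.

Lemma filt_mono k k' x : k' <= k -> filt k x -> filt k' x.
Proof.
move=> k'k; apply: generated_mono => _ [S [z [Mz kS ->]]].
by exists S, z; split=> //; apply: leq_trans kS.
Qed.

Lemma filt_commg k z i : filt k z -> filt k.+1 [~ z, g i].
Proof.
move=> Fz; suff [] : M z /\ filt k.+1 [~ z, g i] by [].
have Psub := M_preimage_subgroup (f := fun x => [~ x, g i])
  (generated_subgroup (filt_gen k.+1)) (comm1g _) (fun x y => @commMg_M x y _).
apply: generated_min Psub _ Fz => _ [S [y [My kS ->]]].
split; first exact: M_lcomm.
have [iS|iS] := boolP (i \in S).
  by rewrite lcomm_commg_mem ?mem_enum //; apply: gen_one.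
rewrite -lcomm_setU1 //; apply: gen_in; exists (i |: S), y.
by rewrite cardsU1 iS.
Qed.

Lemma filt_lcomm k l z : filt k z -> filt (k + size l) (lcomm l z).
Proof.
elim: l => [|i l IH] Fz /=; first by rewrite addn0.
by rewrite addnS; apply/filt_commg/IH.
Qed.

Lemma filt_commg_word k z l : filt k z -> filt k.+1 [~ z, hword l].
Proof.
elim: l k z => [|i l IH] k z Fz /=; first by rewrite commg1; apply: gen_one.
have Fzi := filt_commg i Fz.
rewrite commgMJ conjg_ME; last exact: filt_M Fzi.
apply: gen_mul; first exact: IH.
by apply: gen_mul => //; apply: (@filt_mono k.+2) => //; apply: IH.
Qed.

Lemma filt_commg_all k z y : filt k z -> filt k.+1 [~ z, y].
Proof.
move=> Fz; have [l [m Mm ->]] := words_cover y.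
have Mz := filt_M Fz.
by rewrite commgMJ (commg_M Mz Mm) mul1g conjg_M ?M_commg //; apply: filt_commg_word.
Qed.

Lemma filt_trivial z : filt n.+1 z -> z = 1.
Proof.
apply: (@generated_min _ (fun x => x = 1)) => [|x [S [y [_ nS _]]]].
  by split=> [|x y -> ->|x ->]; rewrite ?mul1g ?invg1.
by move: (leq_trans nS (max_card S)); rewrite card_ord ltnn.
Qed.

Definition span_mod k x := exists2 s, span s & exists2 w, filt k w & x = s * w.

Lemma span_mod_subgroup k : subgroup (span_mod k).
Proof.
split=> [|x y [s Ss [w Fw ->]] [s' Ss' [w' Fw' ->]]|x [s Ss [w Fw ->]]].
- by exists 1; [exact: span1 | exists 1; [exact: gen_one | rewrite mul1g]].
- exists (s * s'); first exact: span_mul.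
  exists (w * w'); first exact: gen_mul.
  by rewrite -!mulgA (mulgA w) (M_abelian (filt_M Fw) (span_M Ss')) !mulgA.
- rewrite M_invE; first by exists s => //; exists w.
  by apply: M_mul; [apply: span_M | apply: filt_M Fw].
Qed.

Lemma filt_span_mod k w : filt k w -> span_mod k.+1 w.
Proof.
apply: generated_min (span_mod_subgroup k.+1) _ => _ [S [z [Mz kS ->]]].
suff [] : M z /\ span_mod k.+1 (lcomm (enum S) z) by [].
have Psub := M_preimage_subgroup (f := lcomm (enum S))
  (span_mod_subgroup k.+1) (lcomm1 _) (fun x y => @lcommM _ x y).
apply: generated_min Psub _ (M_derived Mz) => _ [x [y [_ [_ ->]]]].
split; first exact: M_commg.
have [l [l' [a [b [Ma Mb ->]]]]] := commg_decomp x y.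
have Fu := filt_commg_all (hword l) (filt0 Mb).
have Fw := filt_commg_all (hword l') (filt0 Ma).
have Sv := span_comm_words l l'.
have Mu := filt_M Fu; have Mw := filt_M Fw; have Mv := span_M Sv.
rewrite (lcommM _ (M_mul Mu Mv) Mw) (lcommM _ Mu Mv).
exists (lcomm (enum S) [~ hword l, hword l']); first exact: span_lcomm.
exists (lcomm (enum S) [~ b, hword l] * lcomm (enum S) [~ a, hword l']).
  have kS' : k.+1 <= 1 + size (enum S) by rewrite add1n ltnS -cardE.
  by apply: gen_mul; apply: filt_mono kS' (filt_lcomm _ _).
by rewrite (M_abelian (M_lcomm _ Mu) (M_lcomm _ Mv)) -mulgA.
Qed.

Lemma filt_span k x : filt k x -> span x.
Proof.
have [d] : exists d, n.+1 <= k + d by exists n.+1; rewrite leq_addl.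
elim: d k x => [|d IH] k x; rewrite ?addn0 => kd Fx.
  by rewrite (filt_trivial (filt_mono kd Fx)); apply: span1.
have [s Ss [w Fw ->]] := filt_span_mod Fx.
by apply: span_mul => //; apply: (IH k.+1) => //; rewrite addSnnS.
Qed.

Lemma M_span x : M x -> span x.
Proof. by move/filt0/filt_span. Qed.

Lemma lcs_filt k x : lcs L k.+2 x -> filt k x.
Proof.
elim: k x => [|k IH] x.
  move=> Lx; apply: filt0; apply: generated_min M_subgroup _ Lx.
  by move=> _ [y [z [_ [_ ->]]]]; apply: M_commg.
apply: generated_min (generated_subgroup _) _ => _ [y [z [_ [Lz ->]]]].
by rewrite commgC; apply/filt_commg_all/IH.
Qed.

Lemma lcs_trivial x : lcs L n.+3 x -> x = 1.
Proof. by move/lcs_filt/filt_trivial. Qed.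

Lemma generated_gens x : generated L (fun y => exists i, y = g i) x.
Proof.
set G := generated L _.
have Gg i : G (g i) by apply: gen_in; exists i.
have Gcomm y z : G y -> G z -> G [~ y, z].
  by move=> Gy Gz; do !apply: gen_mul => //; apply: gen_inv.
have Gword l : G (hword l).
  by elim: l => [|i l IH] /=; [apply: gen_one | apply: gen_mul (Gg i) IH].
have [l [m Mm ->]] := words_cover x; apply: gen_mul (Gword l) _.
apply: generated_min (generated_subgroup _) _ (M_span Mm).
move=> _ [a [j [S [_ ->]]]]; rewrite /basis_comm.
by elim: (enum S) => /= [|i s IH]; apply: Gcomm => //; apply: Gg.
Qed.

Definition subprods (l : seq {classic T}) : seq {classic T} :=
  foldr (fun b P => P ++ [seq (b * p : {classic T}) | p : {classic T} <- P])
    [:: 1 : {classic T}] l.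

Lemma size_subprods l : size (subprods l) = (2 ^ size l)%N.
Proof. by elim: l => //= b l IH; rewrite size_cat size_map IH expnS mul2n addnn. Qed.

Lemma mem_subprods_cons b l x : (x \in subprods (b :: l)) =
  (x \in subprods l) ||
  (x \in [seq (b * p : {classic T}) | p : {classic T} <- subprods l]).
Proof. by rewrite /= mem_cat. Qed.

Lemma subprods1 (l : seq {classic T}) : (1 : {classic T}) \in subprods l.
Proof. by elim: l => [|b l IH]; rewrite ?mem_subprods_cons ?IH //= mem_seq1 eqxx. Qed.

Lemma mem_subprods (l : seq {classic T}) b : b \in l -> b \in subprods l.
Proof.
elim: l => //= c l IH; rewrite inE mem_cat => /orP[/eqP->|/IH->//].
by apply/orP; right; apply/mapP; exists 1; rewrite ?mulg1 ?subprods1.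
Qed.

Lemma subprods_M (l : seq {classic T}) x :
  (forall b, b \in l -> M b) -> x \in subprods l -> M x.
Proof.
elim: l x => [|b l IH] x lM; first by rewrite mem_seq1 => /eqP->; apply: M1.
have lM' b' : b' \in l -> M b' by move=> b'l; apply: lM; rewrite inE b'l orbT.
rewrite mem_subprods_cons => /orP[/(IH _ lM') //|/mapP[p pl ->]].
by apply: M_mul; [apply: lM; rewrite mem_head | exact: IH _ lM' pl].
Qed.

Lemma subprods_subgroup (l : seq {classic T}) : (forall b, b \in l -> M b) ->
  subgroup (fun x : {classic T} => x \in subprods l).
Proof.
move=> lM; split=> [|x y|x /[dup] /(subprods_M lM) /M_invE -> //].
  exact: subprods1.
elim: l lM x y => [|b l IH] lM x y.
  by rewrite !mem_seq1 => /eqP-> /eqP->; rewrite mul1g.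
have lM' b' : b' \in l -> M b' by move=> b'l; apply: lM; rewrite inE b'l orbT.
have Mb : M b by apply: lM; rewrite mem_head.
rewrite !mem_subprods_cons => /orP[xl|/mapP[p pl ->]] /orP[yl|/mapP[q ql ->]].
- by rewrite IH.
- apply/orP; right; apply/mapP; exists (x * q); first exact: IH.
  by rewrite !mulgA (M_abelian (subprods_M lM' xl) Mb).
- by apply/orP; right; apply/mapP; exists (p * y); rewrite ?IH // mulgA.
- apply/orP; left; have Mp := subprods_M lM' pl.
  rewrite -mulgA (mulgA p b q) (M_abelian Mp Mb) -mulgA mulgA M_exponent2 // mul1g.
  exact: IH.
Qed.

(* The least element of [A]; [j] only serves as a witness that [A] is not
   empty, and the value is junk when [j \notin A]. *)
Definition setmin (A : {set 'I_n}) (j : 'I_n) : 'I_n := [arg min_(i < j in A) val i].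

Lemma setmin_eq (A : {set 'I_n}) j a : j \in A -> a \in A ->
  (forall k, k \in A -> a <= k) -> setmin A j = a.
Proof.
move=> jA aA amin; rewrite /setmin; case: arg_minnP => // m mA mmin.
by apply/val_inj/eqP; rewrite eqn_leq mmin // amin.
Qed.

Lemma count_nonmin (A : {set 'I_n}) :
  count (fun j => j != setmin A j) (enum A) = #|A|.-1.
Proof.
have [->|[j0 j0A]] := set_0Vmem A; first by rewrite enum_set0 cards0.
have [m mA mmin] := arg_minnP val j0A; have {}mA : m \in A := mA.
rewrite (@eq_in_count _ _ (predC1 m)) => [|j]; last first.
  by rewrite mem_enum => jA; rewrite /= (setmin_eq jA mA mmin).
have := count_predC (pred1 m) (enum A).
by rewrite count_uniq_mem ?enum_uniq // mem_enum mA -cardE add1n => <-.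
Qed.

Definition basis_list : seq {classic T} :=
  [seq (basis_comm (setmin A j) j (A :\ setmin A j :\ j) : {classic T})
     | A <- enum {set 'I_n}, j <- [seq j <- enum A | j != setmin A j]].

Lemma size_basis_list : (size basis_list + 2 ^ n = n * 2 ^ n.-1 + 1)%N.
Proof.
rewrite -sum_card_subsets_ord_pred size_allpairs_dep sumnE big_map big_enum /=.
by congr (_ + _); apply: eq_bigr => A _; rewrite size_filter count_nonmin.
Qed.

Lemma basis_list_cover x : basis_elt x -> x \in basis_list.
Proof.
case=> a [j [S [[aj aS jS] ->]]]; set A := a |: (j |: S).
have aA : a \in A by rewrite !inE eqxx.
have jA : j \in A by rewrite !inE eqxx orbT.
have aj' : a != j by apply: contraTneq aj => ->; rewrite ltnn.
have minA : setmin A j = a.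
  apply: setmin_eq => // k; rewrite !inE => /orP[/eqP->//|/orP[/eqP->|/aS/ltnW//]].
  exact: ltnW.
have AS : A :\ a :\ j = S.
  have aS' : a \notin S by apply/negP => /aS; rewrite ltnn.
  apply/setP=> k; rewrite !inE; case: eqVneq => [->|_]; first by rewrite (negbTE jS).
  by case: eqVneq => [->|//]; rewrite (negbTE aS').
apply/allpairsPdep; exists A, j; rewrite mem_enum inE mem_filter mem_enum jA minA.
by rewrite eq_sym aj' AS.
Qed.

Lemma span_subprods x : span x -> x \in subprods basis_list.
Proof.
have basis_M b : b \in basis_list -> M b.
  by case/allpairsPdep=> [A [j [_ _ ->]]]; apply/M_lcomm/M_commg.
apply: generated_min (subprods_subgroup basis_M) _ => y.
by move/basis_list_cover/mem_subprods.
Qed.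

End CommutatorCalculus.

Section ExpansionGroup.
Variables (n : nat) (phi : T -> Vn n) (g : 'I_n -> T).
Hypothesis E : expansion_group L phi g.

Definition kerphi x := phi x = 0%R.

Let phiM x y : phi (x * y) = (phi x + phi y)%R. Proof. by case: E. Qed.
Let g_invol i : g i * g i = 1. Proof. by case: E. Qed.

Lemma phi1 : phi 1 = 0%R.
Proof. by apply: (@addrI _ (phi 1)); rewrite -phiM mul1g addr0. Qed.

Lemma phiV x : phi x^-1 = (- phi x)%R.
Proof. by apply: (@addrI _ (phi x)); rewrite -phiM mulgV phi1 subrr. Qed.

Lemma kerphi_subgroup : subgroup kerphi.
Proof.
split=> [|x y|x]; rewrite /kerphi ?phiM ?phiV ?phi1 //.
  by move=> -> ->; rewrite addr0.
by move=> ->; rewrite oppr0.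
Qed.

Lemma kerphi_abelian x y : kerphi x -> kerphi y -> x * y = y * x.
Proof. by case: E => _ _ _ ker_elem _ Kx Ky; case: (ker_elem x y Kx Ky). Qed.

Lemma kerphi_exponent2 x : kerphi x -> x * x = 1.
Proof. by case: E => _ _ _ ker_elem _ Kx; case: (ker_elem x x Kx Kx). Qed.

Lemma kerphi_commg x y : kerphi [~ x, y].
Proof.
by rewrite /kerphi /gcomm !phiM !phiV (addrC (phi x)) addKr addNr.
Qed.

Lemma kerphi_derived x :
  kerphi x -> comm_subgroup L (fun _ => True) (fun _ => True) x.
Proof. by case: E => _ _ _ _ ker_derived /ker_derived. Qed.

Lemma phi_hword l : phi (hword g l) = (\sum_(i <- l) basis_e i)%R.
Proof.
case: E => _ phi_g _ _ _.
by elim: l => [|i l IH] /=; rewrite ?big_nil ?phi1 // big_cons phiM phi_g IH.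
Qed.

Definition support (v : Vn n) : seq 'I_n := [seq i <- enum 'I_n | v ord0 i != 0%R].

Lemma sum_support v : (\sum_(i <- support v) basis_e i)%R = v.
Proof.
apply/rowP => k; rewrite summxE big_filter big_mkcond.
rewrite (bigD1_seq k) ?mem_enum ?enum_uniq //= big1 => [|i ik]; last first.
  by rewrite /basis_e mxE (eq_sym k) (negbTE ik) andbF if_same.
rewrite /basis_e mxE !eqxx addr0; change (v 0%R k) with (v ord0 k).
by case: (v ord0 k) => [[|[|m]] //= ?]; apply/val_inj.
Qed.

Lemma kerphi_support_word x : kerphi ((hword g (support (phi x)))^-1 * x).
Proof. by rewrite /kerphi phiM phiV phi_hword sum_support addNr. Qed.

Lemma kerphi_words_cover x : exists l, exists2 m, kerphi m & x = hword g l * m.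
Proof.
exists (support (phi x)), ((hword g (support (phi x)))^-1 * x); last by rewrite mulKVg.
exact: kerphi_support_word.
Qed.

Definition cover_list : seq {classic T} :=
  [seq (hword g (support v) * p : {classic T})
     | v <- enum {: Vn n}, p : {classic T} <- subprods (basis_list g)].

Lemma size_cover_list : size cover_list = (2 ^ (n + size (basis_list g)))%N.
Proof.
by rewrite size_allpairs size_subprods expnD -cardE /Vn card_mx card_Fp ?mul1n.
Qed.

Lemma cover_list_all x : x \in cover_list.
Proof.
rewrite -[x](mulKVg (hword g (support (phi x)))); apply/allpairsP.
exists (phi x, (hword g (support (phi x)))^-1 * x).
split=> //=; first by rewrite mem_enum.
apply: (span_subprods kerphi_subgroup kerphi_abelian kerphi_exponent2 kerphi_commg).
exact: (M_span kerphi_subgroup kerphi_abelian kerphi_exponent2 kerphi_commg g_invol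
  kerphi_words_cover kerphi_derived (kerphi_support_word x)).
Qed.

Lemma expansion_lcs_trivial x : lcs L n.+3 x -> x = 1.
Proof.
exact: (lcs_trivial kerphi_subgroup kerphi_abelian kerphi_exponent2 kerphi_commg g_invol
  kerphi_words_cover).
Qed.

Lemma expansion_generated x : generated L (fun y => exists i, y = g i) x.
Proof.
exact: (generated_gens kerphi_subgroup kerphi_abelian kerphi_exponent2 kerphi_commg
  g_invol kerphi_words_cover kerphi_derived).
Qed.

End ExpansionGroup.

End GroupLaw.

Theorem proposition3p9 (n : nat) (T : Type) (L : group_law T)
    (phi : T -> Vn n) (g : 'I_n -> T) :
  expansion_group L phi g ->
  exists N : nat,
    [/\ card_group T N, card_Lbullet L N,
        N <= 2 ^ ((n * 2 ^ n.-1 + n + 1) - 2 ^ n) &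
        forall x : T, generated L (fun y => exists i, y = g i) x].
Proof.
move=> E.
have [N [cardG cardL N_le]] := subgroup_chain_card (A := fun m => lcs L m.+1)
  (fun m => lcs_subgroup L m.+1) (fun m => @lcs_decr _ L m.+1) (cover_list_all E)
  (fun _ => I) (expansion_lcs_trivial E).
exists N; split=> //; last exact: expansion_generated E.
apply: (leq_trans N_le); rewrite size_cover_list.
by rewrite -addnA (addnC n 1) addnA -(size_basis_list L g) addnAC addnK addnC.
Qed.
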